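(* For every $n$ there is an OBDD $D_n$ on $O(n)$ variables of weak width at most $3$ and a subset $Z$ of its variables such that the function $\neg\exists Z\,D_n$ has no OBDD of size $2^{o(n)}$.
   Context: A binary decision diagram (BDD) is a directed acyclic graph with one source and two sinks labeled $0$ and $1$; every non-sink node is labeled by a Boolean variable and has two outgoing edges labeled $0$ and $1$. On an assignment one follows, from the source, at each node labeled $X$ the edge labeled by the value of $X$; the label of the reached sink is the output. An OBDD is a BDD in which on every source–sink path the variables appear at most once and in a fixed order. The weak width of an OBDD (not necessarily complete) is the maximum, over variables $x$, of the number of nodes labeled by $x$. $\exists Z\,D$ is the function on the remaining variables true iff some extension to $Z$ satisfies $D$. *)

From mathcomp Require Import all_boot.
Set Implicit Arguments. Unset Strict Implicit. Unset Printing Implicit Defensive.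

(* Nodes are
   numbered topologically: every edge from inner node i goes to a sink or
   to an inner node j with i < j.  (Every finite DAG admits such a
   numbering, so this is only a representation choice.)  Variables are
   natural numbers. *)
Inductive target := Sink of bool | Inner of nat.

Record bdd := BDD {
  bdd_n     : nat;
  bdd_label : nat -> nat;
  bdd_lo    : nat -> target;
  bdd_hi    : nat -> target;
  bdd_src   : target
}.

Definition target_ok (m lb : nat) (t : target) : Prop :=
  match t with Sink _ => True | Inner j => lb <= j < m end.

Definition bdd_wf (B : bdd) : Prop :=
  target_ok (bdd_n B) 0 (bdd_src B) /\
  forall i, i < bdd_n B ->
    target_ok (bdd_n B) i.+1 (bdd_lo B i) /\ target_ok (bdd_n B) i.+1 (bdd_hi B i).

(* Evaluation: follow the edges from t; fuel bounds the number of inner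
   nodes visited (bdd_n B fuel suffices for well-formed BDDs). *)
Fixpoint eval_fuel (B : bdd) (fuel : nat) (a : nat -> bool) (t : target) : bool :=
  match t with
  | Sink b => b
  | Inner i =>
      match fuel with
      | 0 => false
      | f.+1 => eval_fuel B f a (if a (bdd_label B i) then bdd_hi B i else bdd_lo B i)
      end
  end.

Definition bdd_eval (B : bdd) (a : nat -> bool) : bool :=
  eval_fuel B (bdd_n B) a (bdd_src B).

(* Ordered: there is a fixed (injective) ranking of the variables such that
   along every edge between inner nodes the rank strictly increases; hence
   on every source-sink path variables appear at most once and in this
   fixed order. *)
Definition bdd_ordered (B : bdd) : Prop :=
  exists pi : nat -> nat, injective pi /\
    forall i j, i < bdd_n B -> (bdd_lo B i = Inner j \/ bdd_hi B i = Inner j) ->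
      pi (bdd_label B i) < pi (bdd_label B j).

Definition is_obdd (B : bdd) : Prop := bdd_wf B /\ bdd_ordered B.

(* Size = number of nodes (inner nodes plus the two sinks). *)
Definition bdd_size (B : bdd) : nat := bdd_n B + 2.

Definition weak_width_le (B : bdd) (w : nat) : Prop :=
  forall x, count (fun i => bdd_label B i == x) (iota 0 (bdd_n B)) <= w.

Definition vars_in (B : bdd) (v : nat) : Prop :=
  forall i, i < bdd_n B -> bdd_label B i < v.

Definition neg_exists (D : bdd) (Z : nat -> bool) (a : nat -> bool) : Prop :=
  ~ exists b : nat -> bool, (forall x, ~~ Z x -> b x = a x) /\ bdd_eval D b = true.

Definition computes (B : bdd) (f : (nat -> bool) -> Prop) : Prop :=
  forall a, bdd_eval B a = true <-> f a.

From mathcomp Require Import all_boot zify.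
Set Implicit Arguments. Unset Strict Implicit. Unset Printing Implicit Defensive.

(* D_n walks through a chain of selector variables that guesses a vertex i
   of an 11-out-regular expander on m = O(n) vertices and one of its
   out-neighbours w, and then reads x_i and y_w; each variable labels a
   single node.  So (exists Z, D_n) says that some edge has both endpoints
   set.  Every variable order has a cut with half of the x's before it and
   at most half of the y's (or vice versa); expansion and bounded degrees
   yield, greedily, an induced matching of size k = Omega(n) across the cut,
   and its 2^k sub-matchings form a fooling set: an OBDD must reach
   pairwise distinct nodes at the cut on them.  The expander exists by
   counting. *)

Definition bstep (B : bdd) (a : nat -> bool) (k : nat) : target :=
  if a (bdd_label B k) then bdd_hi B k else bdd_lo B k.

Definition bdd_ranked (B : bdd) (pi : nat -> nat) : Prop :=
  forall i j, i < bdd_n B -> (bdd_lo B i = Inner j \/ bdd_hi B i = Inner j) ->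
    pi (bdd_label B i) < pi (bdd_label B j).

Lemma eval_fuel_step B a f k :
  eval_fuel B f.+1 a (Inner k) = eval_fuel B f a (bstep B a k).
Proof. by []. Qed.

Lemma eval_fuel_mono B a f g t :
  f <= g -> eval_fuel B f a t = true -> eval_fuel B g a t = true.
Proof. by elim: f g t => [|f IH] [|g] [b|k] //=; rewrite ltnS; apply: IH. Qed.

Lemma eval_fuel_chain B a f i d :
  (forall l, i <= l < i + d -> bstep B a l = Inner l.+1) ->
  eval_fuel B (d + f) a (Inner i) = eval_fuel B f a (Inner (i + d)).
Proof.
elim: d i => [|d IH] i chain; first by rewrite addn0.
rewrite addSn /= -/(bstep B a i) chain; last lia.
by rewrite IH -?addSnnS // => l hl; apply: chain; lia.
Qed.

Lemma eval_fuel_inv B a (Q : target -> Prop) :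
  (forall k, Q (Inner k) -> Q (bstep B a k)) ->
  forall f t, Q t -> eval_fuel B f a t = true -> Q (Sink true).
Proof. by move=> hQ; elim=> [|f IH] [[]|k] //= hk; apply/IH/hQ. Qed.

Lemma computes_iff B (F G : (nat -> bool) -> Prop) :
  computes B F -> (forall a, F a <-> G a) -> computes B G.
Proof. by move=> h e a; rewrite h e. Qed.

Definition splice (pi : nat -> nat) (th : nat) (a b : nat -> bool) (v : nat) : bool :=
  if pi v < th then a v else b v.

Definition target_code (t : target) : nat :=
  match t with Sink false => 0 | Sink true => 1 | Inner k => k.+2 end.

Lemma target_code_inj : injective target_code.
Proof. by case=> [[]|k] [[]|k'] //= [->]. Qed.

Section Cut.

Variables (B : bdd) (pi : nat -> nat) (th : nat).
Hypotheses (B_wf : bdd_wf B) (B_ranked : bdd_ranked B pi).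

Local Notation n := (bdd_n B).

Fixpoint descend (f : nat) (a : nat -> bool) (t : target) : target :=
  match f, t with
  | f'.+1, Inner k => if pi (bdd_label B k) < th then descend f' a (bstep B a k) else t
  | _, _ => t
  end.

Definition above_cut (t : target) : Prop :=
  target_ok n 0 t /\ forall k, t = Inner k -> th <= pi (bdd_label B k).

Lemma target_ok0 lb t : target_ok n lb t -> target_ok n 0 t.
Proof. by case: t => //= k /andP[]. Qed.

Lemma bstep_ok a k : k < n -> target_ok n k.+1 (bstep B a k).
Proof. by move=> hk; rewrite /bstep; case: (proj2 B_wf k hk); case: (a _). Qed.

Lemma eval_fuel_enough a f1 f2 t lb : target_ok n lb t ->
  n - lb <= f1 -> n - lb <= f2 -> eval_fuel B f1 a t = eval_fuel B f2 a t.
Proof.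
elim: f1 f2 t lb => [|f1 IH] [|f2] [b|k] lb //= /andP[hlb hk]; try lia.
by move=> h1 h2; apply: (IH _ _ k.+1); [exact: bstep_ok | lia | lia].
Qed.

Lemma eval_descend a f t : target_ok n 0 t ->
  eval_fuel B n a t = eval_fuel B n a (descend f a t).
Proof.
elim: f t => [|f IH] [b|k] //= hk; case: ifP => // _; rewrite -IH; last first.
  exact: target_ok0 (bstep_ok a hk).
have -> : eval_fuel B n a (Inner k) = eval_fuel B (n - 1).+1 a (Inner k).
  by congr eval_fuel; lia.
by apply: (@eval_fuel_enough a (n - 1) n _ k.+1); [exact: bstep_ok | lia | lia].
Qed.

Lemma descend_low a a' : (forall v, pi v < th -> a v = a' v) ->
  forall f t, descend f a t = descend f a' t.
Proof.
move=> haa'; elim=> [|f IH] [b|k] //=.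
by case: ifP => // hk; rewrite /bstep haa' // IH.
Qed.

Lemma descend_above a f t lb : target_ok n lb t -> n - lb <= f ->
  above_cut (descend f a t).
Proof.
elim: f t lb => [|f IH] [b|k] lb //= /andP[hlb hk]; first lia.
move=> hf; case: ifP => hp; first by apply: (IH _ k.+1); [exact: bstep_ok | lia].
by split => [|_ [<-]]; rewrite // leqNgt hp.
Qed.

Lemma eval_high a a' : (forall v, th <= pi v -> a v = a' v) ->
  forall f t, above_cut t -> eval_fuel B f a t = eval_fuel B f a' t.
Proof.
move=> haa'; elim=> [|f IH] [b|k] //= [hk habove].
have hpk := habove k erefl.
rewrite -/(bstep B a k) -/(bstep B a' k) /bstep haa' //; apply: IH; split.
  by apply: target_ok0 (bstep_ok a' hk).
move=> j hj; apply/(leq_trans hpk)/ltnW/B_ranked => //.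
by move: hj; case: (a' _) => hj; [right | left].
Qed.

(* Where [descend] stops depends only on the variables below the cut, and the
   rest of the run only on those above it; so assignments of the lower
   variables that a common upper completion tells apart stop at distinct
   nodes. *)
Lemma fooling_set_bound (F : (nat -> bool) -> Prop) (I : finType) (al : I -> nat -> bool) :
  computes B F ->
  (forall x y : I, x != y -> exists be : nat -> bool,
      ~ (F (splice pi th (al x) be) <-> F (splice pi th (al y) be))) ->
  #|I| <= bdd_size B.
Proof.
move=> comp hdiff.
pose stop x := descend n (al x) (bdd_src B).
have stop_above x : above_cut (stop x) by apply: (@descend_above _ _ _ 0); [case: B_wf | lia].
have evalF z be : F (splice pi th (al z) be) <->
    eval_fuel B n (splice pi th (al z) be) (stop z) = true.
  rewrite -comp /bdd_eval (eval_descend _ n); last by case: B_wf.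
  by rewrite /stop (descend_low (a' := al z)) // => v hv; rewrite /splice hv.
have stop_inj : injective stop.
  move=> x y hxy; apply/eqP/negP => /negP /hdiff [be]; apply.
  rewrite !evalF hxy (eval_high (a' := splice pi th (al y) be)) //.
  by move=> v hv; rewrite /splice ltnNge hv.
have code_lt x : target_code (stop x) < n.+2.
  by case: (stop_above x); case: (stop x) => [[]|k] //=; lia.
pose g x : 'I_n.+2 := inord (target_code (stop x)).
have g_inj : injective g.
  by move=> x y /(congr1 val); rewrite /= !inordK // => /target_code_inj /stop_inj.
by have := leq_card g g_inj; rewrite card_ord /bdd_size addn2.
Qed.

End Cut.

Lemma card_set (T : finType) : #|{set T}| = 2 ^ #|T|.
Proof.
rewrite -cardsT -card_powerset; apply: eq_card => A.
by rewrite !inE subsetT.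
Qed.

Lemma card_bigcup_le (I T : finType) (P : pred I) (F : I -> {set T}) :
  #|\bigcup_(i | P i) F i| <= \sum_(i | P i) #|F i|.
Proof.
elim/big_rec2: _ => [|i n A _ hA]; first by rewrite cards0.
by rewrite (leq_trans (leq_card_setU _ _).1) ?leq_add2l.
Qed.

Lemma card_setD_ge (T : finType) (A B : {set T}) : #|A| - #|B| <= #|A :\: B|.
Proof. by rewrite cardsD leq_sub2l // subset_leq_card // subsetIr. Qed.

Lemma card_set_of (T : finType) (P : pred T) : #|[set x | P x]| = \sum_x P x.
Proof. by rewrite -sum1dep_card big_mkcond; apply: eq_bigr => x _; case: (P x). Qed.

Lemma exists_subset_card (T : finType) (A : {set T}) k : k <= #|A| ->
  exists2 B : {set T}, B \subset A & #|B| = k.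
Proof.
move=> hk; exists [set x in take k (enum A)].
  by apply/subsetP => x; rewrite inE => /mem_take; rewrite mem_enum.
rewrite cardsE (card_uniqP _) ?take_uniq ?enum_uniq // size_take -cardE.
by case: ltnP => // h; apply/eqP; rewrite eqn_leq hk h.
Qed.

Lemma card_above (I : finType) (f : I -> nat) th :
  #|[set i | th <= f i]| = #|I| - #|[set i | f i < th]|.
Proof.
by rewrite cardsCs; congr (_ - _); apply: eq_card => i; rewrite !inE -ltnNge.
Qed.

Section Balance.

Variables (I : finType) (f g : I -> nat).
Hypotheses (f_inj : injective f) (g_inj : injective g).

Let below (e : I -> nat) t := #|[set i | e i < t]|.

Lemma below_succ e : injective e -> forall t, below e t.+1 <= (below e t).+1.
Proof.
move=> e_inj t; rewrite /below.
have sub : [set i | e i < t.+1] \subset [set i | e i < t] :|: [set i | e i == t].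
  by apply/subsetP => i; rewrite !inE ltnS leq_eqVlt orbC.
rewrite (leq_trans (subset_leq_card sub)) // (leq_trans (leq_card_setU _ _).1) //.
rewrite -addn1 leq_add2l; apply/card_le1_eqP => x y; rewrite !inE.
by move=> /eqP ex /eqP ey; apply: e_inj; rewrite ex ey.
Qed.

Lemma below_all e : below e (\sum_i e i).+1 = #|I|.
Proof.
rewrite /below -cardsT; apply: eq_card => i; rewrite !inE ltnS.
by rewrite (bigD1 i) //= leq_addr.
Qed.

Lemma balanced_threshold h : 0 < h <= #|I| -> exists th,
  (h <= below f th /\ below g th <= h) \/ (h <= below g th /\ below f th <= h).
Proof.
case/andP=> h_gt0 hI.
have ex : exists t, (h <= below f t) || (h <= below g t).
  by exists (\sum_i f i).+1; rewrite below_all hI.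
case: (ex_minnP ex) => -[|t] reached t_min.
  have below0 e : below e 0 = 0 by apply: eq_card0 => i; rewrite inE.
  by move: reached; rewrite !below0; lia.
have : ~~ ((h <= below f t) || (h <= below g t)) by apply/negP => /t_min; rewrite ltnn.
exists t.+1; have := below_succ f_inj t; have := below_succ g_inj t.
by case/orP: reached; lia.
Qed.

End Balance.

Section InducedMatching.

Variables (X Y : finType) (r : X -> Y -> bool).

Definition mixing (p : nat) : Prop :=
  forall (P : {set X}) (Q : {set Y}), p <= #|P| -> p <= #|Q| ->
    exists x y, [/\ x \in P, y \in Q & r x y].

Definition induced_matching (M : {set X * Y}) : Prop :=
  forall e e', e \in M -> e' \in M -> r e.1 e'.2 -> e = e'.

Lemma induced_matching_bound (B : bdd) (pi : nat -> nat) (th : nat)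
    (ea : X -> nat) (eb : Y -> nat) (M : {set X * Y}) :
  bdd_wf B -> bdd_ranked B pi ->
  computes B (fun a => ~ exists u w, [/\ r u w, a (ea u) & a (eb w)]) ->
  injective ea -> injective eb -> (forall u w, ea u != eb w) ->
  (forall e, e \in M -> [/\ pi (ea e.1) < th, th <= pi (eb e.2) & r e.1 e.2]) ->
  induced_matching M ->
  2 ^ #|M| <= bdd_size B.
Proof.
move=> wf ranked comp ea_inj eb_inj ea_eb sepM indM.
pose E := {e : X * Y | e \in M}.
pose low (S : {set E}) v := [exists e in S, v == ea (val e).1].
pose high (k : E) v := v == eb (val k).2.
pose W (a : nat -> bool) := exists u w, [/\ r u w, a (ea u) & a (eb w)].
have key S k : W (splice pi th (low S) (high k)) <-> k \in S.
  (* [low S] sets the left ends of the edges in [S] and [high k] the right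
     end of [k]; as [M] is induced, the only possible edge is [k] itself. *)
  have [hk1 hk2 hk3] := sepM _ (valP k).
  split=> [[u [w [huw]]] | kS]; last first.
    exists (val k).1, (val k).2; rewrite /splice hk1 ltnNge hk2 /= /high eqxx; split=> //.
    by apply/exists_inP; exists k.
  rewrite /splice /low /high; case: ifP => _ /=.
    case/exists_inP=> l lS /eqP/ea_inj eu; case: ifP => _ /=.
      by case/exists_inP=> l' _ /eqP e; move: (ea_eb (val l').1 w); rewrite e eqxx.
    move=> /eqP /eb_inj ew; move: huw; rewrite eu ew => /(indM _ _ (valP l) (valP k)).
    by move/val_inj => <-.
  by move=> /eqP e; move: (ea_eb u (val k).2); rewrite e eqxx.
have := @fooling_set_bound B pi th wf ranked (fun a => ~ W a) _ low comp.
rewrite card_set card_sig; apply.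
move=> S S' /eqP neq; have [k] : exists k, (k \in S) != (k \in S').
  apply/existsP; apply: contra_notT neq => /existsPn h; apply/setP => k.
  by apply/eqP; rewrite -[_ == _]negbK; apply: h.
move=> hk; exists (high k); rewrite !key.
by case: (k \in S) (k \in S') hk => [] [] // _ [h1 h2]; [apply: h2 | apply: h1].
Qed.

(* Greedily pick an edge between C and T and discard the neighbours of its
   endpoints; bounded degrees keep both sides large enough for [mixing]. *)
Lemma induced_matching_exists (p D : nat) :
  mixing p -> forall k (C : {set X}) (T : {set Y}),
  (forall x, x \in C -> #|[set y | r x y]| <= D) ->
  (forall y, y \in T -> #|[set x | r x y]| <= D) ->
  p + k * D <= #|C| -> p + k * D <= #|T| ->
  exists M : {set X * Y}, [/\ #|M| = k,
    forall e, e \in M -> [/\ e.1 \in C, e.2 \in T & r e.1 e.2] & induced_matching M].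
Proof.
move=> mix; elim=> [|k IH] C T degC degT hC hT.
  by exists set0; split=> [|e|e e']; rewrite ?cards0 ?inE.
have [c [b [cC bT rcb]]] := mix C T (leq_trans (leq_addr _ _) hC) (leq_trans (leq_addr _ _) hT).
pose C' := C :\: [set x | r x b].
pose T' := T :\: [set y | r c y].
have hC' : p + k * D <= #|C'|.
  by apply: leq_trans (card_setD_ge _ _); move: (degT b bT) hC; rewrite mulSn; lia.
have hT' : p + k * D <= #|T'|.
  by apply: leq_trans (card_setD_ge _ _); move: (degC c cC) hT; rewrite mulSn; lia.
have [M [cardM sepM indM]] := IH C' T'
  (fun x hx => degC x (subsetP (subsetDl _ _) x hx))
  (fun y hy => degT y (subsetP (subsetDl _ _) y hy)) hC' hT'.
have M1 e : e \in M -> ~~ r e.1 b by case/sepM => /setDP[_]; rewrite inE.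
have M2 e : e \in M -> ~~ r c e.2 by case/sepM => _ /setDP[_]; rewrite inE.
exists ((c, b) |: M); split.
- by rewrite cardsU1 cardM; case: ((c, b) \in M) / boolP => // /M1; rewrite rcb.
- move=> e; rewrite !inE => /orP[/eqP -> // | /sepM[/setDP[? _] /setDP[? _] ?]].
  by split.
- move=> e e'; rewrite !inE => /orP[/eqP -> | eM] /orP[/eqP -> | e'M] //= hr.
  + by move: (M2 _ e'M); rewrite hr.
  + by move: (M1 _ eM); rewrite hr.
  + exact: indM.
Qed.

Lemma cut_lower_bound (B : bdd) (pi : nat -> nat) (th : nat) (ea : X -> nat) (eb : Y -> nat)
    (p D k : nat) (C : {set X}) (T : {set Y}) :
  bdd_wf B -> bdd_ranked B pi ->
  computes B (fun a => ~ exists u w, [/\ r u w, a (ea u) & a (eb w)]) ->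
  injective ea -> injective eb -> (forall u w, ea u != eb w) -> mixing p ->
  (forall x, x \in C -> pi (ea x) < th /\ #|[set y | r x y]| <= D) ->
  (forall y, y \in T -> th <= pi (eb y) /\ #|[set x | r x y]| <= D) ->
  p + k * D <= #|C| -> p + k * D <= #|T| ->
  2 ^ k <= bdd_size B.
Proof.
move=> wf ranked comp ea_inj eb_inj ea_eb mix hC hT sizeC sizeT.
have [M [<- sepM indM]] := induced_matching_exists mix
  (fun x xC => (hC x xC).2) (fun y yT => (hT y yT).2) sizeC sizeT.
apply: (induced_matching_bound (th := th) wf ranked comp ea_inj eb_inj ea_eb _ indM) => e eM.
by have [/hC [? _] /hT [? _] ?] := sepM e eM.
Qed.

End InducedMatching.

Lemma mixing_transpose (X Y : finType) (r : X -> Y -> bool) p :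
  mixing r p -> mixing (fun y x => r x y) p.
Proof. by move=> mix P Q hP hQ; have [x [y [xQ yP rxy]]] := mix Q P hQ hP; exists y, x. Qed.

Section OutRegularGraph.

Variables d m : nat.
Implicit Types (g : {ffun 'I_d * 'I_m -> 'I_m}) (P Q : {set 'I_m}).

(* [g (j, x)] is the [j]-th out-neighbour of [x]. *)
Definition adj g (x y : 'I_m) : bool := [exists j : 'I_d, g (j, x) == y].

Definition mixingb mu g : bool :=
  [forall P : {set 'I_m}, forall Q : {set 'I_m}, (#|P| == mu) ==> (#|Q| == mu) ==>
     [exists x in P, exists y in Q, adj g x y]].

Lemma mixingbP mu g : mixingb mu g -> mixing (adj g) mu.
Proof.
move=> /forallP mix P Q hP hQ.
have [P' sP cP] := exists_subset_card hP; have [Q' sQ cQ] := exists_subset_card hQ.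
move: (mix P') => /forallP /(_ Q'); rewrite cP cQ eqxx /=.
case/exists_inP => x xP /exists_inP [y yQ rxy].
by exists x, y; split=> //; [apply: (subsetP sP) | apply: (subsetP sQ)].
Qed.

Lemma card_out_neighbours g x : #|[set y | adj g x y]| <= d.
Proof.
have -> : [set y | adj g x y] = [set g (j, x) | j : 'I_d].
  apply/setP => y; rewrite !inE; apply/existsP/imsetP => -[j].
    by move=> /eqP <-; exists j.
  by move=> _ ->; exists j.
by rewrite (leq_trans (leq_imset_card _ _)) ?card_ord.
Qed.

Definition high_in_degree g D := [set y | D < #|[set x | adj g x y]|].

Lemma card_high_in_degree g D : D.+1 * #|high_in_degree g D| <= d * m.
Proof.
have edges : \sum_y #|[set x | adj g x y]| <= d * m.
  rewrite (eq_bigr _ (fun y _ => card_set_of _)) exchange_big /=.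
  rewrite (eq_bigr _ (fun x _ => esym (card_set_of _))).
  have -> : d * m = \sum_(x < m) d by rewrite sum_nat_const card_ord mulnC.
  by apply: leq_sum => x _; apply: card_out_neighbours.
apply: leq_trans edges; rewrite (bigID (mem (high_in_degree g D))) /= (leq_trans _ (leq_addr _ _)) //.
by rewrite mulnC -sum_nat_const; apply: leq_sum => y; rewrite inE.
Qed.

Definition avoiding P Q : {set {ffun 'I_d * 'I_m -> 'I_m}} :=
  [set g : {ffun 'I_d * 'I_m -> 'I_m} | [forall x in P, forall j : 'I_d, g (j, x) \notin Q]].

Lemma card_avoiding P Q :
  #|avoiding P Q| = (m - #|Q|) ^ (#|P| * d) * m ^ ((m - #|P|) * d).
Proof.
pose F (z : 'I_d * 'I_m) : pred 'I_m := [pred y | (z.2 \in P) ==> (y \notin Q)].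
have -> : #|avoiding P Q| = #|(family F : simpl_pred {ffun 'I_d * 'I_m -> 'I_m})|.
  apply: eq_card => g; rewrite !inE; apply/forall_inP/familyP => /= H.
    by case=> j x; rewrite /F inE /=; apply/implyP => xP; move/forallP: (H x xP).
  by move=> x xP; apply/forallP => j; have := H (j, x); rewrite /F inE /= xP.
rewrite card_family foldrE big_map big_enum /=.
rewrite -(pair_big xpredT xpredT (fun j x => #|F (j, x)|)) /=.
have cC (A : {set 'I_m}) : #|[predC A]| = m - #|A| by have := cardC A; rewrite card_ord; lia.
have row j : \prod_x #|F (j, x)| = (m - #|Q|) ^ #|P| * m ^ (m - #|P|).
  rewrite (bigID (mem P)) /=.
  rewrite (eq_bigr (fun=> m - #|Q|)) => [|x xP]; last first.
    by rewrite -cC; apply: eq_card => y; rewrite /F !inE /= xP.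
  rewrite [X in _ * X](eq_bigr (fun=> m)) => [|x xP]; last first.
    by rewrite -[RHS](card_ord m); apply: eq_card => y; rewrite /F !inE /= (negbTE xP).
  by rewrite !prod_nat_const -(cC P); congr (_ * _ ^ _).
by rewrite (eq_bigr _ (fun j _ => row j)) prod_nat_const card_ord expnMn -!expnM.
Qed.

(* Union bound over the pairs [P, Q] of [mu]-sets that a non-mixing graph avoids. *)
Lemma card_nonmixing_le mu :
  #|[set g | ~~ mixingb mu g]| <= 2 ^ m * 2 ^ m * ((m - mu) ^ (mu * d) * m ^ ((m - mu) * d)).
Proof.
pose sized (PQ : {set 'I_m} * {set 'I_m}) := (#|PQ.1| == mu) && (#|PQ.2| == mu).
have cover : [set g | ~~ mixingb mu g] \subset \bigcup_(PQ | sized PQ) avoiding PQ.1 PQ.2.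
  apply/subsetP => g; rewrite inE => /forallPn [P] /forallPn [Q].
  rewrite negb_imply => /andP [hP]; rewrite negb_imply => /andP [hQ /exists_inPn noedge].
  apply/bigcupP; exists (P, Q); first by rewrite /sized hP hQ.
  rewrite inE; apply/forall_inP => x xP; apply/forallP => j; apply/negP => yQ.
  by move/negP: (exists_inPn (noedge x xP) _ yQ); apply; apply/existsP; exists j.
apply: leq_trans (subset_leq_card cover) _; apply: leq_trans (card_bigcup_le _ _) _.
apply: (@leq_trans (\sum_(PQ : {set 'I_m} * {set 'I_m})
    ((m - mu) ^ (mu * d) * m ^ ((m - mu) * d)))).
  rewrite [leqRHS](bigID sized) /= (leq_trans _ (leq_addr _ _)) //.
  by apply: leq_sum => PQ /andP [/eqP h1 /eqP h2]; rewrite card_avoiding h1 h2.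
by rewrite sum_nat_const card_prod card_set card_ord.
Qed.

End OutRegularGraph.

Lemma mixing_graph_count_ineq mu : 0 < mu ->
  2 ^ (3 * mu) * 2 ^ (3 * mu) * ((3 * mu - mu) ^ (mu * 11) * (3 * mu) ^ ((3 * mu - mu) * 11))
  < (3 * mu) ^ (11 * (3 * mu)).
Proof.
move=> mu_gt0.
have -> : 3 * mu - mu = 2 * mu by lia.
have -> : 11 * (3 * mu) = mu * 11 + 2 * mu * 11 by lia.
rewrite expnD mulnA ltn_pmul2r ?expn_gt0; last lia.
have -> : 2 ^ (3 * mu) * 2 ^ (3 * mu) = 64 ^ mu by rewrite -expnD -(expnM 2 6); congr (_ ^ _); lia.
rewrite mulnC (mulnC mu 11) !(expnM _ 11 mu) -expnMn ltn_exp2r //.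
by rewrite !expnMn mulnAC ltn_pmul2r ?expn_gt0 ?mu_gt0.
Qed.

(* Counting: a random 11-out-regular graph on [3 mu] vertices has an edge
   between any two [mu]-sets with positive probability. *)
Lemma exists_mixing_graph mu : 0 < mu ->
  exists g : {ffun 'I_11 * 'I_(3 * mu) -> 'I_(3 * mu)}, mixingb mu g.
Proof.
move=> mu_gt0; apply/existsP; apply: contraLR (mixing_graph_count_ineq mu_gt0).
move=> /existsPn none; rewrite -leqNgt.
have := card_nonmixing_le 11 (3 * mu) mu.
have -> : [set g | ~~ @mixingb 11 (3 * mu) mu g] = setT.
  by apply/setP => g; rewrite !inE none.
by rewrite cardsT card_ffun card_prod !card_ord.
Qed.

Section ChainBDD.

Variables (m : nat) (fn : nat -> nat -> nat).
Hypothesis fn_lt : forall j i, fn j i < m.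

(* Node [k] is labelled by variable [k]; the nodes come in four layers:
   - [k < m]: selector of the left vertex [i = k];
   - [m <= k < 2m]: the variable [x_(k-m)];
   - [2m <= k < 13m]: selector of the [j]-th out-neighbour [fn j i] of [i],
     where [k = 2m + 11 i + j];
   - [13m <= k < 14m]: the variable [y_(k-13m)].
   Choosing 1 at a selector commits to it, so the accepting paths are the
   pairs [(i, j)] with [x_i] and [y_(fn j i)] both true. *)
Definition chain_lo (k : nat) : target :=
  if k < m then (if k.+1 < m then Inner k.+1 else Sink false)
  else if k < 2 * m then Sink false
  else if k < 13 * m then (if ((k - 2 * m) %% 11).+1 < 11 then Inner k.+1 else Sink false)
  else Sink false.

Definition chain_hi (k : nat) : target :=
  if k < m then Inner (m + k)
  else if k < 2 * m then Inner (2 * m + (k - m) * 11)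
  else if k < 13 * m then Inner (13 * m + fn ((k - 2 * m) %% 11) ((k - 2 * m) %/ 11))
  else Sink true.

Definition chain_bdd : bdd :=
  BDD (14 * m) id chain_lo chain_hi (if 0 < m then Inner 0 else Sink false).

Definition chain_selectors (x : nat) : bool := (x < m) || (2 * m <= x < 13 * m).

Definition edge_witness (a : nat -> bool) : Prop :=
  exists i j, [/\ i < m, j < 11, a (m + i) & a (13 * m + fn j i)].

Lemma chain_wf : bdd_wf chain_bdd.
Proof.
split=> [|i /= hi]; first by rewrite /=; case: ifP => //= hm; lia.
rewrite /chain_lo /chain_hi; have := fn_lt ((i - 2 * m) %% 11) ((i - 2 * m) %/ 11).
by split; repeat case: ifP => //=; lia.
Qed.

Lemma chain_obdd : is_obdd chain_bdd.
Proof.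
split; first exact: chain_wf.
exists id; split=> // i j hi /= edge; have [_ /(_ i hi) [hlo hhi]] := chain_wf.
by case: edge hlo hhi => /= -> /=; lia.
Qed.

Lemma chain_weak_width : weak_width_le chain_bdd 1.
Proof.
by move=> x; rewrite -/(count_mem x _) count_uniq_mem ?iota_uniq // leq_b1.
Qed.

Lemma chain_vars : vars_in chain_bdd (14 * m).
Proof. by []. Qed.

Lemma chain_selectors_lt x : chain_selectors x -> x < 14 * m.
Proof. rewrite /chain_selectors; lia. Qed.

(* Along an accepting run the values read so far pin down the selected
   vertex [i], and at a y-node also a [j] with [y = fn j i]. *)
Definition run_inv (b : nat -> bool) (t : target) : Prop :=
  match t with
  | Sink true => edge_witness b
  | Sink false => True
  | Inner k => k < 14 * m /\
     (if k < 2 * m then True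
      else if k < 13 * m then is_true (b (m + (k - 2 * m) %/ 11))
      else exists i j, [/\ i < m, j < 11, b (m + i) & fn j i = k - 13 * m])
  end.

Lemma run_inv_step b k : run_inv b (Inner k) -> run_inv b (bstep chain_bdd b k).
Proof.
move=> /= [hk inv]; rewrite /bstep /= /chain_lo /chain_hi.
have := fn_lt ((k - 2 * m) %% 11) ((k - 2 * m) %/ 11).
case: (ltnP k m) => [hkm | hmk] hfn.
  by case: (b k) => /=; [|case: ifP => //= ?]; split; rewrite 1?ifT //; lia.
case: (ltnP k (2 * m)) => [h2m | h2m].
  case hbk: (b k) => //=; split; first lia.
  rewrite ifF; last lia; rewrite ifT; last lia.
  by have -> : m + (2 * m + (k - m) * 11 - 2 * m) %/ 11 = k by lia.
move: inv; rewrite ltnNge h2m /=; case: (ltnP k (13 * m)) => [h13 | h13] inv.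
  case: (b k) => /=.
    split; first lia; rewrite ifF; last lia; rewrite ifF; last lia.
    by exists ((k - 2 * m) %/ 11), ((k - 2 * m) %% 11); split => //; lia.
  case: ifP => //= hj; split; first lia; rewrite ifF; last lia; rewrite ifT; last lia.
  by have -> : (k.+1 - 2 * m) %/ 11 = (k - 2 * m) %/ 11 by lia.
case hbk: (b k) => //=; case: inv => i [j [hi hj hbi hfij]].
by exists i, j; split=> //; rewrite hfij subnKC.
Qed.

Lemma chain_sound b : bdd_eval chain_bdd b = true -> edge_witness b.
Proof.
apply: (eval_fuel_inv (Q := run_inv b)); first exact: run_inv_step.
by rewrite /=; case: ifP => //= hm; split; rewrite ?ifT //; lia.
Qed.

Definition select (a : nat -> bool) (i0 j0 : nat) (v : nat) : bool :=
  if chain_selectors v then (v == i0) || (v == 2 * m + i0 * 11 + j0) else a v.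

Lemma chain_lo_selector k : k.+1 < m -> chain_lo k = Inner k.+1.
Proof. by move=> hk; rewrite /chain_lo !ifT //; lia. Qed.

Lemma chain_hi_selector k : k < m -> chain_hi k = Inner (m + k).
Proof. by move=> hk; rewrite /chain_hi ifT. Qed.

Lemma chain_hi_x i : i < m -> chain_hi (m + i) = Inner (2 * m + i * 11).
Proof. by move=> hi; rewrite /chain_hi ifF ?ifT ?addKn //; lia. Qed.

Lemma chain_lo_block i j : i < m -> j.+1 < 11 ->
  chain_lo (2 * m + i * 11 + j) = Inner (2 * m + i * 11 + j).+1.
Proof. by move=> hi hj; rewrite /chain_lo ifF 1?ifF ?ifT //; lia. Qed.

Lemma chain_hi_block i j : i < m -> j < 11 ->
  chain_hi (2 * m + i * 11 + j) = Inner (13 * m + fn j i).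
Proof.
move=> hi hj; rewrite /chain_hi ifF 1?ifF ?ifT; try lia.
have -> : 2 * m + i * 11 + j - 2 * m = i * 11 + j by lia.
by rewrite modnMDl divnMDl // modn_small ?divn_small ?addn0.
Qed.

Lemma chain_hi_y i : i < m -> chain_hi (13 * m + i) = Sink true.
Proof. by move=> hi; rewrite /chain_hi !ifF //; lia. Qed.

Lemma chain_complete (a : nat -> bool) i0 j0 : i0 < m -> j0 < 11 ->
  a (m + i0) -> a (13 * m + fn j0 i0) -> bdd_eval chain_bdd (select a i0 j0) = true.
Proof.
move=> hi0 hj0 hx hy; set b := select a i0 j0; have hfn := fn_lt j0 i0.
have step k : bstep chain_bdd b k = if b k then chain_hi k else chain_lo k by [].
have b_sel v : chain_selectors v -> b v = (v == i0) || (v == 2 * m + i0 * 11 + j0).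
  by rewrite /b /select => ->.
have b_free v : ~~ chain_selectors v -> b v = a v by rewrite /b /select => /negbTE ->.
have b_off v : chain_selectors v -> v != i0 -> v != 2 * m + i0 * 11 + j0 -> b v = false.
  by move=> sv /negbTE h1 /negbTE h2; rewrite b_sel // h1 h2.
rewrite /bdd_eval /= ifT; last lia.
apply: (@eval_fuel_mono _ _ (i0 + (j0 + 2).+2)); first lia.
rewrite eval_fuel_chain => [|l hl]; last first.
  by rewrite step b_off ?chain_lo_selector // /chain_selectors; lia.
rewrite add0n eval_fuel_step step b_sel; last by rewrite /chain_selectors hi0.
rewrite eqxx chain_hi_selector // eval_fuel_step step b_free; last first.
  by rewrite /chain_selectors; lia.
rewrite hx chain_hi_x // -[2 * m + i0 * 11]addn0 eval_fuel_chain => [|l hl]; last first.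
  have -> : l = 2 * m + i0 * 11 + (l - (2 * m + i0 * 11)) by lia.
  by rewrite step b_off ?chain_lo_block // /chain_selectors; lia.
rewrite eval_fuel_step step b_sel; last by rewrite /chain_selectors; lia.
rewrite addn0 eqxx orbT chain_hi_block // eval_fuel_step step b_free; last first.
  by rewrite /chain_selectors; lia.
by rewrite hy chain_hi_y.
Qed.

Lemma chain_neg_exists a : neg_exists chain_bdd chain_selectors a <-> ~ edge_witness a.
Proof.
split=> [noext [i [j [hi hj hx hy]]] | nowit [b [agree /chain_sound]]].
  apply: noext; exists (select a i j); split; last exact: chain_complete.
  by move=> x /negbTE hx'; rewrite /select hx'.
case=> i [j [hi hj hx hy]]; apply: nowit; exists i, j; have := fn_lt j i.
by split=> //; rewrite -agree // /chain_selectors; lia.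
Qed.

End ChainBDD.

Section GraphBDD.

Variable m : nat.
Hypothesis m_gt0 : 0 < m.
Variable g : {ffun 'I_11 * 'I_m -> 'I_m}.

(* [chain_bdd] wants the out-neighbours as a function on [nat]; out of range
   arguments are sent to the junk value 0. *)
Definition out_nbr (j i : nat) : nat :=
  match (insub j : option 'I_11), (insub i : option 'I_m) with
  | Some j', Some i' => val (g (j', i'))
  | _, _ => 0
  end.

Lemma out_nbr_lt j i : out_nbr j i < m.
Proof. by rewrite /out_nbr; case: insub => [j'|] //; case: insub => [i'|] //; apply: ltn_ord. Qed.

Lemma out_nbrE (j : 'I_11) (x : 'I_m) : out_nbr j x = g (j, x).
Proof. by rewrite /out_nbr !valK. Qed.

Lemma edge_witnessE a : edge_witness m out_nbr a <->
  exists u w : 'I_m, [/\ adj g u w, a (m + u) & a (13 * m + w)].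
Proof.
split=> [[i [j [hi hj hx hy]]] | [u [w [/existsP [j /eqP guw] hx hy]]]].
  exists (Ordinal hi), (g (Ordinal hj, Ordinal hi)).
  by split; [apply/existsP; exists (Ordinal hj) | | rewrite -out_nbrE].
by exists u, j; split=> //; rewrite out_nbrE guw.
Qed.

End GraphBDD.

(* Cut the order where 786 k = m / 2 of the variables of one side lie below
   it and at most m / 2 of the other side.  Removing the at most
   11 m / 132 = 131 k vertices of in-degree > 131 leaves both sides of the cut
   with 655 k = 524 k + 131 k vertices, enough for a greedy induced matching
   of size k. *)
Lemma mixing_graph_obdd_bound k m (G : {ffun 'I_11 * 'I_m -> 'I_m}) B pi :
  0 < k -> m = 1572 * k -> mixing (adj G) (524 * k) ->
  bdd_wf B -> injective pi -> bdd_ranked B pi ->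
  computes B (fun a => ~ exists u w, [/\ adj G u w, a (m + u) & a (13 * m + w)]) ->
  2 ^ k <= bdd_size B.
Proof.
move=> k_gt0 m_def mixG wf pi_inj ranked comp.
pose x_var (i : 'I_m) := m + i; pose y_var (i : 'I_m) := 13 * m + i.
have x_inj : injective x_var by move=> i j /addnI /val_inj.
have y_inj : injective y_var by move=> i j /addnI /val_inj.
have xy_neq u w : x_var u != y_var w by apply/eqP; rewrite /x_var /y_var; have := ltn_ord u; lia.
have px_inj : injective (fun i => pi (x_var i)) by move=> i j /pi_inj /x_inj.
have py_inj : injective (fun i => pi (y_var i)) by move=> i j /pi_inj /y_inj.
have high_small : #|high_in_degree G 131| <= 131 * k.
  by have := card_high_in_degree G 131; lia.
have out_small x : #|[set y | adj G x y]| <= 131.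
  exact: leq_trans (card_out_neighbours G x) _.
have in_small y : y \notin high_in_degree G 131 -> #|[set x | adj G x y]| <= 131.
  by rewrite inE -leqNgt.
have [|th [[hx hy] | [hy hx]]] := balanced_threshold px_inj py_inj (h := 786 * k).
- by rewrite card_ord; lia.
- apply: (cut_lower_bound (th := th) (p := 524 * k) (D := 131)
    (C := [set i | pi (x_var i) < th])
    (T := [set i | th <= pi (y_var i)] :\: high_in_degree G 131)
    wf ranked comp x_inj y_inj xy_neq mixG).
  + by move=> x; rewrite inE => ?; split.
  + by move=> y /setDP [yT yH]; split; [rewrite inE in yT | exact: in_small].
  + by move: hx; lia.
  + apply: leq_trans (card_setD_ge _ _); rewrite card_above card_ord; lia.
have comp' : computes B (fun a => ~ exists u w, [/\ adj G w u, a (y_var u) & a (x_var w)]).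
  apply: (computes_iff comp) => a.
  by split=> noedge [u [w [? ? ?]]]; apply: noedge; exists w, u.
apply: (cut_lower_bound (th := th) (p := 524 * k) (D := 131)
  (C := [set i | pi (y_var i) < th] :\: high_in_degree G 131)
  (T := [set i | th <= pi (x_var i)])
  wf ranked comp' y_inj x_inj _ (mixing_transpose mixG)).
- by move=> u w; rewrite eq_sym.
- by move=> y /setDP [yC yH]; split; [rewrite inE in yC | exact: in_small].
- by move=> x; rewrite inE => ?; split.
- by apply: leq_trans (card_setD_ge _ _); lia.
- by rewrite card_above card_ord; lia.
Qed.

Definition hard_mu (N : nat) : nat := 524 * N.+1.

Lemma hard_mu_gt0 N : 0 < hard_mu N.
Proof. by rewrite /hard_mu muln_gt0. Qed.

Definition hard_graph (N : nat) : {ffun 'I_11 * 'I_(3 * hard_mu N) -> 'I_(3 * hard_mu N)} :=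
  xchoose (exists_mixing_graph (hard_mu_gt0 N)).

Definition hard_bdd (N : nat) : bdd := chain_bdd (3 * hard_mu N) (out_nbr (hard_graph N)).

Definition hard_selectors (N : nat) : nat -> bool := chain_selectors (3 * hard_mu N).

Lemma hard_bdd_obdd N : is_obdd (hard_bdd N).
Proof. by apply: chain_obdd; apply: out_nbr_lt; rewrite muln_gt0 hard_mu_gt0. Qed.

Lemma hard_bdd_lower_bound N B :
  is_obdd B -> computes B (neg_exists (hard_bdd N) (hard_selectors N)) -> 2 ^ N.+1 <= bdd_size B.
Proof.
case=> wf [pi [pi_inj ranked]] comp.
apply: (@mixing_graph_obdd_bound _ _ (hard_graph N) _ pi _ _ _ wf pi_inj ranked) => //.
- by rewrite /hard_mu; lia.
- exact/mixingbP/(xchooseP (exists_mixing_graph _)).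
apply: (computes_iff comp) => a.
by rewrite /hard_bdd /hard_selectors chain_neg_exists ?edge_witnessE //; apply: out_nbr_lt.
Qed.

Theorem lemma4 :
  exists c : nat, exists D : nat -> bdd, exists nv : nat -> nat,
  exists Z : nat -> nat -> bool,
    (forall n,
       is_obdd (D n) /\ nv n <= c * n + c /\ vars_in (D n) (nv n) /\
       weak_width_le (D n) 3 /\ (forall x, Z n x -> x < nv n)) /\
    (* the minimal OBDD size of  not (exists Z_n, D_n)  is not 2^{o(n)} *)
    exists k : nat, 0 < k /\
      forall N, exists n, N <= n /\
        forall B, is_obdd B -> computes B (neg_exists (D n) (Z n)) ->
          2 ^ n <= bdd_size B ^ k.
Proof.
exists (14 * 1572), hard_bdd, (fun N => 14 * (3 * hard_mu N)), hard_selectors; split.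
  move=> N; split; first exact: hard_bdd_obdd.
  split; first by rewrite /hard_mu; lia.
  split; first exact: chain_vars.
  split; first by move=> x; apply: leq_trans (chain_weak_width _ _ x) _.
  exact: chain_selectors_lt.
exists 1; split=> // N; exists N; split=> // B obdd comp.
by rewrite expn1 (leq_trans _ (hard_bdd_lower_bound obdd comp)) // expnS leq_pmull.
Qed.
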